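(* Let $X\subseteq 2^\omega$ be such that for all distinct $x,y\in X$ the set $\{n: x(n)\neq y(n)\}$ is infinite, and let $Y\subseteq X$. Let $N$ be a model of ZFC containing $X$ and $Y$, and let $G$ be $\mathbb{Q}(X,Y)$-generic over $N$. For $n<\omega$ put $U_n^G=\bigcup\{[s]: \exists r\in G\ (n,s)\in r\}$. Then $X\cap\bigcap_{n<\omega}U_n^G = X\setminus Y$.
   Context: For $s\in 2^{<\omega}$, $[s]=\{y\in 2^\omega: s\subseteq y\}$ and $|s|$ is the length of $s$. For $x\in 2^\omega$, $s\in 2^{<\omega}$, $k<\omega$, define $\mathrm{swap}(x,s,k)=\{y\in 2^\omega: s\subseteq y,\ |\{i\geq |s|: y(i)\neq x(i)\}|\leq k\}$. The poset $\mathbb{Q}(X,Y)$ consists of all finite sets $r$ of elements of the form $(n,s)$ with $n<\omega$, $s\in 2^{<\omega}$, or of the form $(n,(x,t,k))$ with $x\in Y$, $t\in 2^{<\omega}$, $n,k<\omega$, subject to the condition: whenever $(n,s)\in r$ and $(n,(x,t,k))\in r$ (same $n$), then $[s]\cap\mathrm{swap}(x,t,k)=\emptyset$. The ordering is reverse inclusion: $r_1\le r_2$ iff $r_1\supseteq r_2$. *)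

From Stdlib Require Import List Arith.
Import ListNotations.

Definition cantor := nat -> bool.

Definition prefix (s : list bool) (y : cantor) : Prop :=
  forall i, i < length s -> nth i s false = y i.

Definition swapset (x : cantor) (s : list bool) (k : nat) (y : cantor) : Prop :=
  prefix s y /\
  exists l : list nat, length l <= k /\
    (forall i, length s <= i -> y i <> x i -> In i l).

Definition infinitely_different (x y : cantor) : Prop :=
  forall m, exists n, m <= n /\ x n <> y n.

Inductive elt : Type :=
| Basic : nat -> list bool -> elt
| Swap : nat -> cantor -> list bool -> nat -> elt.

Definition cond := elt -> Prop.

Definition finite_cond (r : cond) : Prop :=
  exists l : list elt, forall e, r e <-> In e l.

Definition QXY (X Y : cantor -> Prop) (r : cond) : Prop :=
  finite_cond r /\
  (forall n x t k, r (Swap n x t k) -> Y x) /\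
  (forall n s x t k, r (Basic n s) -> r (Swap n x t k) ->
      forall y, ~ (prefix s y /\ swapset x t k y)).

Definition qle (r1 r2 : cond) : Prop := forall e, r2 e -> r1 e.

Definition dense_in (X Y : cantor -> Prop) (D : cond -> Prop) : Prop :=
  (forall r, D r -> QXY X Y r) /\
  (forall p, QXY X Y p -> exists q, D q /\ qle q p).

Definition qfilter (X Y : cantor -> Prop) (G : cond -> Prop) : Prop :=
  (forall r, G r -> QXY X Y r) /\
  (exists r, G r) /\
  (forall p q, G p -> QXY X Y q -> qle p q -> G q) /\
  (forall p q, G p -> G q -> exists r, G r /\ qle r p /\ qle r q).

(* G is a filter meeting every dense set in the family DN
   (DN represents the dense subsets of Q(X,Y) belonging to the ground model N) *)
Definition generic_over (X Y : cantor -> Prop) (DN : (cond -> Prop) -> Prop)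
  (G : cond -> Prop) : Prop :=
  qfilter X Y G /\
  (forall D, DN D -> dense_in X Y D -> exists r, G r /\ D r).

(* Sets of conditions definable in N from X, Y (hence belonging to N). *)
Definition D_basic (X Y : cantor -> Prop) (x : cantor) (n : nat) : cond -> Prop :=
  fun r => QXY X Y r /\ exists s, r (Basic n s) /\ prefix s x.

Definition D_swap (X Y : cantor -> Prop) (y : cantor) : cond -> Prop :=
  fun r => QXY X Y r /\ exists n t k, r (Swap n y t k) /\ prefix t y.

(* Minimal closure assumption on the ground model N containing X and Y. *)
Definition ground_model_for (X Y : cantor -> Prop) (DN : (cond -> Prop) -> Prop) : Prop :=
  (forall x n, X x -> DN (D_basic X Y x n)) /\
  (forall y, Y y -> DN (D_swap X Y y)).

Definition U_G (G : cond -> Prop) (n : nat) (y : cantor) : Prop :=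
  exists r s, G r /\ r (Basic n s) /\ prefix s y.

(* A point z of X lies outside U_n^G exactly when some condition of G
   places a swap clause (n, (z, t, k)) with t a prefix of z: such a clause
   forbids every basic open set [s] around z at index n.  Genericity against
   D_swap puts such a clause in G for every z in Y.  Conversely, for z in
   X \ Y every swap clause (n, (x, t, k)) of a condition has x in Y, hence
   x <> z, so x and z differ at infinitely many places; an initial segment s
   of z long enough to contain k+1 of them beyond |t| makes [s] disjoint
   from swap(x, t, k).  Hence D_basic is dense and G puts z in every U_n^G. *)

From Stdlib Require Import List Arith Lia.
Import ListNotations.

Definition elt_index (e : elt) : nat :=
  match e with Basic n _ | Swap n _ _ _ => n end.

Definition cond_add (p : cond) (e : elt) : cond := fun e' => p e' \/ e' = e.

Definition basic_disjoint_swap (s : list bool) (x : cantor) (t : list bool) (k : nat) :=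
  forall y, ~ (prefix s y /\ swapset x t k y).

Definition restrict (z : cantor) (L : nat) : list bool := map z (seq 0 L).

Lemma length_restrict z L : length (restrict z L) = L.
Proof. unfold restrict. now rewrite length_map, length_seq. Qed.

Lemma prefix_restrict z L : prefix (restrict z L) z.
Proof.
  intros i Hi. rewrite length_restrict in Hi. unfold restrict.
  rewrite (nth_indep _ false (z 0)) by now rewrite length_map, length_seq.
  now rewrite map_nth, seq_nth.
Qed.

Lemma swapset_refl x t k : prefix t x -> swapset x t k x.
Proof.
  intros Ht. split; [exact Ht|]. exists []. split; [simpl; lia|].
  intros i _ Hne. now elim Hne.
Qed.

Lemma uniform_bound_list {A : Type} (P : A -> nat -> Prop)
  (P_mono : forall a L L', L <= L' -> P a L -> P a L') (l : list A) :
  (forall a, In a l -> exists L, P a L) -> exists L, forall a, In a l -> P a L.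
Proof.
  induction l as [|a l IH]; intros Hl.
  - exists 0. intros a [].
  - destruct (Hl a (or_introl eq_refl)) as [La Ha].
    destruct IH as [Ll Hll]; [intros b Hb; exact (Hl b (or_intror Hb))|].
    exists (Nat.max La Ll). intros b [<-|Hb].
    + apply (P_mono _ La); [lia|exact Ha].
    + apply (P_mono _ Ll); [lia|exact (Hll b Hb)].
Qed.

Lemma finite_cond_fresh_index (p : cond) :
  finite_cond p -> exists n, forall e, p e -> elt_index e <> n.
Proof.
  intros [l Hl].
  destruct (uniform_bound_list (fun e L => elt_index e < L)) with (l := l)
    as [L HL].
  - intros e L L' HLL' He. lia.
  - intros e _. exists (S (elt_index e)). lia.
  - exists L. intros e He. specialize (HL e (proj1 (Hl e) He)). lia.
Qed.


Lemma qle_cond_add p e : qle (cond_add p e) p.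
Proof. intros e' He'. now left. Qed.

Lemma finite_cond_add p e : finite_cond p -> finite_cond (cond_add p e).
Proof.
  intros [l Hl]. exists (e :: l). intros e'. unfold cond_add. rewrite Hl.
  simpl. split; intros [H|H]; auto.
Qed.

Lemma QXY_add_basic X Y p n s :
  QXY X Y p ->
  (forall x t k, p (Swap n x t k) -> basic_disjoint_swap s x t k) ->
  QXY X Y (cond_add p (Basic n s)).
Proof.
  intros (Hfin & HY & Hcomp) Hdisj. split; [now apply finite_cond_add|split].
  - intros m x t k [H|H]; [exact (HY _ _ _ _ H)|discriminate].
  - intros m s' x t k [Hb|Hb] [Hs|Hs]; try discriminate.
    + exact (Hcomp _ _ _ _ _ Hb Hs).
    + injection Hb as -> ->. exact (Hdisj _ _ _ Hs).
Qed.

Lemma QXY_add_swap X Y p n x t k :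
  QXY X Y p -> Y x -> (forall e, p e -> elt_index e <> n) ->
  QXY X Y (cond_add p (Swap n x t k)).
Proof.
  intros (Hfin & HY & Hcomp) Yx Hfresh. split; [now apply finite_cond_add|split].
  - intros m x' t' k' [H|H]; [exact (HY _ _ _ _ H)|now injection H as -> -> -> ->].
  - intros m s x' t' k' [Hb|Hb] [Hs|Hs]; try discriminate.
    + exact (Hcomp _ _ _ _ _ Hb Hs).
    + injection Hs as -> _ _ _. now elim (Hfresh _ Hb).
Qed.


Lemma D_swap_dense X Y y : Y y -> dense_in X Y (D_swap X Y y).
Proof.
  intros Yy. split; [now intros r [Hr _]|].
  intros p Hp. destruct (finite_cond_fresh_index p (proj1 Hp)) as [n Hn].
  exists (cond_add p (Swap n y [] 0)).
  split; [|apply qle_cond_add].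
  split; [now apply QXY_add_swap|].
  exists n, [], 0. split; [now right|]. intros i Hi. simpl in Hi. lia.
Qed.

Lemma not_U_G_of_swap X Y G r n y t k :
  qfilter X Y G -> G r -> r (Swap n y t k) -> prefix t y -> ~ U_G G n y.
Proof.
  intros (GQ & _ & _ & Gdir) Gr Hr Ht (r' & s & Gr' & Hr' & Hs).
  destruct (Gdir r r' Gr Gr') as (q & Gq & Hq & Hq').
  destruct (GQ q Gq) as (_ & _ & Hcomp).
  apply (Hcomp n s y t k (Hq' _ Hr') (Hq _ Hr) y).
  split; [exact Hs|now apply swapset_refl].
Qed.


Lemma infinitely_different_positions x z :
  infinitely_different x z -> forall m k, exists ps L,
    NoDup ps /\ length ps = k /\ forall i, In i ps -> m <= i < L /\ x i <> z i.
Proof.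
  intros Hxz m k. induction k as [|k (ps & L & Hnd & Hlen & Hps)].
  - exists [], m. split; [constructor|split; [reflexivity|intros i []]].
  - destruct (Hxz (Nat.max m L)) as (i & Hi & Hxzi).
    exists (i :: ps), (S i). split; [|split].
    + constructor; [|exact Hnd]. intros Hin. specialize (Hps i Hin). lia.
    + simpl. lia.
    + intros j [<-|Hj]; [split; [lia|exact Hxzi]|].
      destruct (Hps j Hj) as [? ?]. split; [lia|assumption].
Qed.

(* Beyond [|t|], the k+1 places where x and z differ inside a long enough
   initial segment of z would all have to be swaps, but only k are allowed. *)
Lemma long_prefix_disjoint_swap x z t k :
  infinitely_different x z -> exists L, forall s,
    L <= length s -> prefix s z -> basic_disjoint_swap s x t k.
Proof.
  intros Hxz.
  destruct (infinitely_different_positions x z Hxz (length t) (S k))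
    as (ps & L & Hnd & Hlen & Hps).
  exists L. intros s HL Hsz y [Hsy [_ (l & Hl & Hcov)]].
  assert (Hincl : incl ps l).
  { intros i Hi. destruct (Hps i Hi) as [[Hti HiL] Hxzi].
    apply Hcov; [exact Hti|].
    rewrite <- (Hsy i) by lia. rewrite (Hsz i) by lia.
    intros Heq. now apply Hxzi. }
  pose proof (NoDup_incl_length Hnd Hincl). lia.
Qed.

Lemma D_basic_dense X Y z n
  (hX : forall x y, X x -> X y -> x <> y -> infinitely_different x y)
  (hYX : forall y, Y y -> X y) :
  X z -> ~ Y z -> dense_in X Y (D_basic X Y z n).
Proof.
  intros Xz nYz. split; [now intros r [Hr _]|].
  intros p Hp. pose proof Hp as [[lp Hlp] [HY _]].
  destruct (uniform_bound_list (fun e L => forall m x t k, e = Swap m x t k ->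
      forall s, L <= length s -> prefix s z -> basic_disjoint_swap s x t k))
    with (l := lp) as [L HL].
  - intros e L L' HLL' He m x t k -> s Hs. apply (He m x t k eq_refl). lia.
  - intros [m s|m x t k] He.
    + exists 0. discriminate.
    + apply Hlp in He. pose proof (HY _ _ _ _ He) as Yx.
      assert (x <> z) by (intros ->; contradiction).
      destruct (long_prefix_disjoint_swap x z t k (hX x z (hYX x Yx) Xz H))
        as [L HL].
      exists L. intros ? ? ? ? [= <- <- <- <-]. exact HL.
  - exists (cond_add p (Basic n (restrict z L))). split; [|apply qle_cond_add].
    split.
    + apply QXY_add_basic; [exact Hp|].
      intros x t k Hs. apply (HL _ (proj1 (Hlp _) Hs) n x t k eq_refl).
      * now rewrite length_restrict.
      * apply prefix_restrict.
    + exists (restrict z L). split; [now right|apply prefix_restrict].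
Qed.

Theorem mainTheorem2 (X Y : cantor -> Prop)
  (hX : forall x y, X x -> X y -> x <> y -> infinitely_different x y)
  (hYX : forall y, Y y -> X y)
  (DN : (cond -> Prop) -> Prop) (hN : ground_model_for X Y DN)
  (G : cond -> Prop) (hG : generic_over X Y DN G) :
  forall z : cantor, (X z /\ forall n, U_G G n z) <-> (X z /\ ~ Y z).
Proof.
  intros z. destruct hN as [hNbasic hNswap]. destruct hG as [Gfilter Gmeets].
  split; intros [Xz Hz]; split; try exact Xz.
  - intros Yz.
    destruct (Gmeets _ (hNswap z Yz) (D_swap_dense X Y z Yz))
      as (r & Gr & _ & n & t & k & Hr & Ht).
    exact (not_U_G_of_swap X Y G r n z t k Gfilter Gr Hr Ht (Hz n)).
  - intros n.
    destruct (Gmeets _ (hNbasic z n Xz) (D_basic_dense X Y z n hX hYX Xz Hz))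
      as (r & Gr & _ & s & Hr & Hs).
    now exists r, s.
Qed.
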